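(* Let $n=2m$ with $m\ge1$, $K$ a field, and let $K(2,n)\subset K[x_{ij}:1\le i\le j\le n]$ be the monomial ideal generated by all products $x_{ij}x_{hk}$ (with $i\le j$, $h\le k$) not involving any variable $x_{a,n+1-a}$ ($1\le a\le m$) and satisfying at least one of: (1) $a+b=n+1$ for some $a\in\{i,j\}$ and $b\in\{h,k\}$; (2) $i<h$ and $j<k$. Let $\Delta$ be the simplicial complex on vertex set $\{(i,j):1\le i\le j\le n\}$ whose Stanley–Reisner ideal is $K(2,n)$, and $\Delta'=\operatorname{core}(\Delta)$. Then $\Delta'$ is pure and has exactly $2^{n-1}$ facets, each with $m$ vertices.
   Context: A cone point of a simplicial complex is a vertex lying in every facet; $\operatorname{core}(\Delta)$ is the restriction of $\Delta$ to the vertices that are not cone points. *)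

From mathcomp Require Import all_boot.
Set Implicit Arguments. Unset Strict Implicit. Unset Printing Implicit Defensive.

(* Vertices are pairs (i,j) of naturals 1 <= i <= j <= n, encoded in
   'I_n.+1 * 'I_n.+1 (so that the indices are the paper's, 1-based). *)
Definition pt (n : nat) := ('I_n.+1 * 'I_n.+1)%type.

Definition vert (n : nat) : {set pt n} :=
  [set p : pt n | (0 < p.1) && (p.1 <= p.2)].

Definition antidiag (n : nat) (p : pt n) : bool := p.1 + p.2 == n.+1.

Definition gen (n : nat) (p q : pt n) : bool :=
  [&& p \in vert n, q \in vert n, ~~ antidiag p, ~~ antidiag q &
      [|| (p.1 + q.1 == n.+1), (p.1 + q.2 == n.+1), (p.2 + q.1 == n.+1),
          (p.2 + q.2 == n.+1) | (p.1 < q.1) && (p.2 < q.2)]].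

(* Stanley--Reisner complex, on vertex set V, of the monomial ideal generated
   by the quadratic monomials x_p x_q with g p q: F is a face iff the
   squarefree monomial x_F is not in the ideal, i.e. no generator divides x_F.
   A generator x_p x_q divides the squarefree x_F iff p <> q and p, q in F. *)
Definition sr_complex (T : finType) (V : {set T}) (g : rel T) : {set {set T}} :=
  [set F : {set T} | (F \subset V) &&
     [forall p in F, forall q in F, (p != q) ==> ~~ g p q]].

Definition facets (T : finType) (D : {set {set T}}) : {set {set T}} :=
  [set F in D | [forall G in D, (F \subset G) ==> (G == F)]].

Definition cone_point (T : finType) (D : {set {set T}}) (v : T) : bool :=
  [forall F in facets D, v \in F].

Definition core (T : finType) (V : {set T}) (D : {set {set T}}) : {set {set T}} :=
  [set F in D | F \subset [set v in V | ~~ cone_point D v]].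

Definition pure (T : finType) (D : {set {set T}}) : Prop :=
  exists d, forall F, F \in facets D -> #|F| = d.

Definition Delta (n : nat) : {set {set pt n}} := sr_complex (vert n) (@gen n).

From mathcomp Require Import all_boot zify.
Set Implicit Arguments. Unset Strict Implicit. Unset Printing Implicit Defensive.

(* Two non-antidiagonal vertices [i,j] and [h,k] span an edge of Delta exactly
   when the intervals are nested and no endpoint of one is the mirror image
   x |-> n+1-x of an endpoint of the other; the antidiagonal vertices are the
   cone points.  So the faces of the core are the chains of nested intervals
   whose endpoint set U contains no mirror pair.  Such a U has at most m
   elements (U and its mirror image are disjoint in 1..n), and a chain has at most #|U| intervals; conversely a face with
   fewer than m vertices can be enlarged, so the facets are the chains of m
   intervals.  Their endpoint set is a transversal of the m mirror pairs
   (2^m choices), and a chain of #|U| intervals with endpoint set U is built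
   from the outside in, dropping the left or the right endpoint at each step
   (2^(m-1) choices). *)

(* [lia] sees the same ordinal at types ['I_n.+1] and [Finite.sort _] as two
   unrelated atoms; [set] abstracts all its occurrences up to conversion. *)
Ltac ord_lia :=
  repeat match goal with
  | |- context [@nat_of_ord ?k ?i] =>
      let x := fresh "x" in move: (ltn_ord i); set x := @nat_of_ord k i; clearbody x
  end; lia.

Section Chains.
Variable n : nat.
Implicit Types (F G : {set pt n}) (p q w I : pt n) (U : {set 'I_n.+1}) (x : 'I_n.+1).

Definition subint p q := (q.1 <= p.1) && (p.2 <= q.2).

Definition chain F :=
  [forall p in F, (p.1 <= p.2) && [forall q in F, subint p q || subint q p]].

Definition ends F : {set 'I_n.+1} := [set p.1 | p in F] :|: [set p.2 | p in F].

Lemma chainP F :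
  reflect ({in F, forall p, p.1 <= p.2} /\ {in F &, forall p q, subint p q || subint q p})
          (chain F).
Proof.
apply: (iffP forall_inP) => [h | [hle hsub] p pF].
  by split=> [p /h /andP[] | p q /h /andP[_ /forall_inP]] //; apply.
by rewrite hle //=; apply/forall_inP => q; apply: hsub.
Qed.

Lemma chain_le F p : chain F -> p \in F -> p.1 <= p.2.
Proof. by case/chainP => h _; apply: h. Qed.

Lemma chain_nested F p q : chain F -> p \in F -> q \in F -> subint p q || subint q p.
Proof. by case/chainP => _ h; apply: h. Qed.

Lemma chainS F G : F \subset G -> chain G -> chain F.
Proof.
move=> /subsetP sFG /chainP[hle hsub]; apply/chainP.
by split=> [p /sFG | p q /sFG pG /sFG]; [apply: hle | apply: hsub].
Qed.

Lemma chainU1 F p : chain F -> p.1 <= p.2 -> {in F, forall q, subint q p || subint p q} ->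
  chain (p |: F).
Proof.
move=> /chainP[hle hsub] hp hin; apply/chainP; split=> [q | q r].
  by case/setU1P => [-> | /hle].
case/setU1P => [-> | qF]; case/setU1P => [-> | rF].
- by rewrite /subint !leqnn.
- by rewrite orbC hin.
- exact: hin.
- exact: hsub.
Qed.

Lemma ends1 F p : p \in F -> p.1 \in ends F.
Proof. by move=> pF; rewrite inE imset_f. Qed.

Lemma ends2 F p : p \in F -> p.2 \in ends F.
Proof. by move=> pF; rewrite inE orbC imset_f. Qed.

Lemma endsP F x : reflect (exists2 p, p \in F & x = p.1 \/ x = p.2) (x \in ends F).
Proof.
apply: (iffP setUP) => [[] /imsetP[p pF ->] | [p pF [] ->]];
  by [exists p; auto | left; apply: imset_f | right; apply: imset_f].
Qed.

Lemma endsS F G : F \subset G -> ends F \subset ends G.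
Proof. by move=> sFG; rewrite setUSS ?imsetS. Qed.

Lemma ends0 : ends set0 = set0.
Proof. by rewrite /ends !imset0 setU0. Qed.

Lemma endsU1 F p : ends (p |: F) = p.1 |: (p.2 |: ends F).
Proof.
by rewrite /ends !imsetU1 -!setUA; congr (_ |: _); rewrite setUCA.
Qed.

Lemma chain_widest F p0 :
  chain F -> p0 \in F -> exists2 w, w \in F & {in F, forall q, subint q w}.
Proof.
move=> hF p0F; have [w wF wmax] := arg_maxnP (fun p : pt n => p.2 - p.1) p0F.
exists w => // q qF; have := wmax q qF; have := chain_nested hF qF wF.
have := chain_le hF qF; have := chain_le hF wF; rewrite /subint; lia.
Qed.

Lemma ends_within F w :
  chain F -> {in F, forall q, subint q w} -> {in ends F, forall x, w.1 <= x <= w.2}.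
Proof.
move=> hF hw x /endsP[p pF ex]; have := hw p pF; have := chain_le hF pF.
by rewrite /subint; case: ex => ->; ord_lia.
Qed.

Lemma ends_not_both F w : chain F -> w \notin F -> {in F, forall q, subint q w} ->
  (w.1 \notin ends F) || (w.2 \notin ends F).
Proof.
move=> hF wF hw; have [-> | [p0 p0F]] := set_0Vmem F; first by rewrite ends0 inE.
have [w' w'F hw'] := chain_widest hF p0F.
rewrite -negb_and; apply: contra wF => /andP[/(ends_within hF hw') e1 /(ends_within hF hw') e2].
suff -> : w = w' by [].
have := hw w' w'F; move: e1 e2; rewrite /subint.
case: w w' {hw w'F hw'} => [a b] [c d] /= h1 h2 h3.
by congr pair; apply: ord_inj; move: h1 h2 h3; ord_lia.
Qed.

Lemma card_chain_le_ends F : chain F -> #|F| <= #|ends F|.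
Proof.
have [k] := ubnP #|F|; elim: k F => // k IH F ltF hF.
have [-> | [p0 p0F]] := set_0Vmem F; first by rewrite cards0.
have [w wF hw] := chain_widest hF p0F.
have sF : F :\ w \subset F := subD1set F w.
have hF' := chainS sF hF.
have hw' : {in F :\ w, forall q, subint q w} by move=> q /setD1P[_ /hw].
have lt_ends : ends (F :\ w) \proper ends F.
  rewrite properE endsS //=; apply/subsetPn.
  have /orP[] := ends_not_both hF' (negbT (setD11 w F)) hw'.
    by exists w.1 => //; apply: ends1.
  by exists w.2 => //; apply: ends2.
rewrite (cardsD1 w F) wF; apply: leq_ltn_trans (proper_card lt_ends).
by apply: IH hF'; move: ltF; rewrite (cardsD1 w F) wF.
Qed.

Definition full_chains U := [set F | [&& chain F, ends F == U & #|F| == #|U|]].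

Lemma full_chainsP U F : reflect [/\ chain F, ends F = U & #|F| = #|U|] (F \in full_chains U).
Proof. by rewrite inE; apply: (iffP and3P) => -[? /eqP ? /eqP ?]. Qed.

Lemma full_chains0 : full_chains set0 = [set set0].
Proof.
apply/setP => F; apply/full_chainsP/set1P => [[_ _] | ->].
  by rewrite cards0 => /eqP; rewrite cards_eq0 => /eqP.
by split; rewrite ?ends0 ?cards0 //; apply/chainP; split => p; rewrite inE.
Qed.

Lemma full_chains_notin U F c p :
  F \in full_chains (U :\ c) -> c = p.1 \/ c = p.2 -> p \notin F.
Proof.
case/full_chainsP => _ hends _ hc; apply/negP => pF.
suff : c \in ends F by rewrite hends setD11.
by apply/endsP; exists p.
Qed.

Lemma full_chainsD1 U F c : chain F -> c \in U -> c \notin ends F -> ends F \subset U ->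
  #|F|.+1 = #|U| -> F \in full_chains (U :\ c).
Proof.
move=> hF cU cF sFU hcard; have cardUc : #|U :\ c| = #|F|.
  by apply/succn_inj; rewrite hcard (cardsD1 c U) cU.
apply/full_chainsP; split=> //; apply/eqP; rewrite eqEcard cardUc card_chain_le_ends // andbT.
apply/subsetP => x xF; rewrite in_setD1 (subsetP sFU) // andbT.
by apply: contraNneq cF => <-.
Qed.

Lemma full_chains_rec U a b : a \in U -> b \in U -> {in U, forall x, a <= x <= b} ->
  full_chains U = [set (a, b) |: F | F in full_chains (U :\ a) :|: full_chains (U :\ b)].
Proof.
move=> aU bU hab; apply/setP => F; apply/idP/imsetP.
- case/full_chainsP => hF hends hcard.
  have [p0 p0F] : exists p0, p0 \in F.
    by apply/set0Pn; rewrite -card_gt0 hcard card_gt0; apply/set0Pn; exists a.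
  have [w wF hw] := chain_widest hF p0F.
  have hw1 : w.1 \in U by rewrite -hends ends1.
  have hw2 : w.2 \in U by rewrite -hends ends2.
  have := ends_within hF hw; rewrite hends => hwU.
  have ew : w = (a, b).
    move: (hab _ hw1) (hab _ hw2) (hwU _ aU) (hwU _ bU).
    by case: w {wF hw hw1 hw2 hwU} => c d /= h1 h2 h3 h4; congr pair; apply: ord_inj;
      move: h1 h2 h3 h4; ord_lia.
  subst w; exists (F :\ (a, b)); last by rewrite setD1K.
  have hF' := chainS (subD1set F (a, b)) hF.
  have sFU : ends (F :\ (a, b)) \subset U by rewrite -hends endsS ?subD1set.
  have card' : #|F :\ (a, b)|.+1 = #|U| by rewrite -hcard (cardsD1 (a, b) F) wF.
  have hw' : {in F :\ (a, b), forall q, subint q (a, b)} by move=> q /setD1P[_ /hw].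
  apply/setUP; have /orP[aF | bF] := ends_not_both hF' (negbT (setD11 (a, b) F)) hw'.
    by left; apply: full_chainsD1.
  by right; apply: full_chainsD1.
- case=> F' F'in ->{F}; have [c [cU ec hc]] : exists c, [/\ c \in U, c = a \/ c = b &
      F' \in full_chains (U :\ c)].
    by case/setUP: F'in => h; [exists a | exists b]; split; auto.
  have abF' : (a, b) \notin F' by apply: full_chains_notin hc _.
  case/full_chainsP: hc => hF' hends hcard; apply/full_chainsP; split.
  + apply: (chainU1 hF'); first by have /andP[] := hab a aU.
    move=> q qF; have sEU : ends F' \subset U by rewrite hends subD1set.
    have := hab _ (subsetP sEU _ (ends1 qF)); have := hab _ (subsetP sEU _ (ends2 qF)).
    by rewrite /subint; ord_lia.
  + rewrite endsU1 hends; apply/setP => x; rewrite !inE.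
    by case: ec => ->; case: eqVneq => [-> | _] //=; case: eqVneq => [-> | _].
  + by rewrite cardsU1 abF' hcard (cardsD1 c U) cU.
Qed.

Lemma card_full_chains U k : #|U| = k.+1 -> #|full_chains U| = 2 ^ k.
Proof.
elim: k U => [|k IH] U hU.
  have [u ->] := cards1P (introT eqP hU).
  rewrite (@full_chains_rec _ u u) ?set11 //; last by move=> x /set1P ->; rewrite leqnn.
  by rewrite setUid setDv full_chains0 imset_set1 cards1.
have [u0 u0U] : exists u0, u0 \in U by apply/set0Pn; rewrite -card_gt0 hU.
have [a aU amin] := arg_minnP (@nat_of_ord n.+1) u0U.
have [b bU bmax] := arg_maxnP (@nat_of_ord n.+1) u0U.
have cardD1 c : c \in U -> #|U :\ c| = k.+1.
  by move=> cU; apply/succn_inj; rewrite -hU (cardsD1 c U) cU.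
have ab : a != b.
  apply/eqP => eab; suff : #|U| <= 1 by rewrite hU.
  rewrite -(cards1 a); apply/subset_leq_card/subsetP => x xU; rewrite inE; apply/eqP/ord_inj.
  by have := amin x xU; have := bmax x xU; rewrite -eab; ord_lia.
have abF F : F \in full_chains (U :\ a) :|: full_chains (U :\ b) -> (a, b) \notin F.
  by case/setUP => /full_chains_notin; apply; [left | right].
have disj : full_chains (U :\ a) :&: full_chains (U :\ b) = set0.
  apply/setP => F; rewrite in_set0; apply/negbTE/setIP.
  case=> /full_chainsP[_ ea _] /full_chainsP[_ eb _].
  by move: (setD11 a U); rewrite -ea eb in_setD1 ab => /negbT/negP.
have hab : {in U, forall x, a <= x <= b}.
  by move=> x xU; apply/andP; split; [exact: amin | exact: bmax].
rewrite (full_chains_rec aU bU hab) card_in_imset => [|F G /abF aF /abF aG /= e]; last first.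
  by rewrite -(setU1K aF) e setU1K.
by rewrite cardsU disj cards0 subn0 (IH _ (cardD1 a aU)) (IH _ (cardD1 b bU)) expnS mul2n addnn.
Qed.

(* The interval inserting x into the chain F: the widest member of F that
   misses x, stretched to reach x. *)
Definition hull F x : pt n :=
  let A := [set I in F | ~~ (I.1 <= x <= I.2)] in
  if [pick I in A] is Some I0 then
    let w := [arg max_(I > I0 in A) (I.2 - I.1)] in
    if x < w.1 then (x, w.2) else (w.1, x)
  else (x, x).

Lemma hullP F x :
  ({in F, forall I, I.1 <= x <= I.2} /\ hull F x = (x, x)) \/
  exists2 w, w \in F &
    {in F, forall I, ~~ (I.1 <= x <= I.2) -> I.2 - I.1 <= w.2 - w.1} /\
    ((x < w.1 /\ hull F x = (x, w.2)) \/ (w.2 < x /\ hull F x = (w.1, x))).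
Proof.
rewrite /hull; case: pickP => [I0 I0A | noA]; last first.
  by left; split=> // I IF; move: (noA I); rewrite inE IF => /negbFE.
right; case: arg_maxnP => // w /[dup] wA; rewrite inE => /andP[wF wx] wmax.
exists w => //; split=> [I IF Ix | ]; first by apply: wmax; rewrite inE IF.
by case: ifP => xw; [left | right]; split=> //; move: wx xw; ord_lia.
Qed.

Lemma hull_chain F x : chain F -> chain (hull F x |: F).
Proof.
move=> hF; have [[hx ->] | [w wF [wmax hw]]] := hullP F x.
  by apply: chainU1 => // I /hx; rewrite /subint; ord_lia.
have w12 := chain_le hF wF.
apply: chainU1 => //; first by case: hw => -[xw ->] /=; move: w12 xw; ord_lia.
move=> I IF; have := chain_nested hF IF wF; have := chain_le hF IF.
case: (boolP (I.1 <= x <= I.2)) => [Ix | /(wmax I IF) Iw].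
  by case: hw => -[xw ->]; move: Ix xw w12; rewrite /subint; ord_lia.
by case: hw => -[xw ->]; move: Iw xw w12; rewrite /subint; ord_lia.
Qed.

Lemma hull_ends F x : (hull F x).1 \in x |: ends F /\ (hull F x).2 \in x |: ends F.
Proof.
have [[_ ->] | [w wF [_ [[_ ->] | [_ ->]]]]] := hullP F x;
  by rewrite /= !in_setU1 eqxx ?ends1 ?ends2 ?orbT.
Qed.

Lemma hull_inj F : chain F -> injective (hull F).
Proof.
move=> hF x y exy; apply: ord_inj; have := hullP F y; have := hullP F x; rewrite exy.
have natE (a b c d : 'I_n.+1) : (a, b) = (c, d) -> (a = c :> nat) /\ (b = d :> nat).
  by case=> -> ->.
case=> [[_ ->] | [w wF [_ [[xw ->] | [xw ->]]]]];
  case=> [[_ /natE[]] | [w' w'F [_ [[yw /natE[]] | [yw /natE[]]]]]]; try ord_lia.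
- by move: (chain_nested hF wF w'F) xw yw; rewrite /subint; ord_lia.
- by move: (chain_nested hF wF w'F) xw yw; rewrite /subint; ord_lia.
Qed.

End Chains.

Section Complexes.
Variable T : finType.
Implicit Types (V F G : {set T}) (D : {set {set T}}) (g : rel T).

Lemma facetsP D F :
  reflect (F \in D /\ forall G, G \in D -> F \subset G -> G = F) (F \in facets D).
Proof.
rewrite inE; apply: (iffP andP) => -[FD hmax]; split=> //.
  by move=> G GD FG; apply/eqP; move/forall_inP/(_ G GD)/implyP: hmax; apply.
by apply/forall_inP => G GD; apply/implyP => /(hmax G GD) ->.
Qed.

Lemma facet_exists D G : G \in D -> exists2 F, F \in facets D & G \subset F.
Proof.
move=> GD; have [F /maxsetP[FD Fmax] GF] := @maxset_exists _ (mem D) G GD.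
by exists F => //; apply/facetsP; split=> // H HD /(Fmax _ HD).
Qed.

Lemma sr_complexP V g F :
  reflect (F \subset V /\ {in F &, forall p q, p != q -> ~~ g p q}) (F \in sr_complex V g).
Proof.
rewrite inE; apply: (iffP andP) => -[FV hg]; split=> //.
  by move=> p q pF qF; move/forall_inP/(_ p pF)/forall_inP/(_ q qF)/implyP: hg.
by apply/forall_inP => p pF; apply/forall_inP => q qF; apply/implyP; apply: hg.
Qed.

End Complexes.

Section StanleyReisner.
Variables m n : nat.
Hypothesis hn : n = m.*2.
Implicit Types (F : {set pt n}) (p q v : pt n) (U W : {set 'I_n.+1}) (V : {set 'I_m}).
Implicit Types (x y : 'I_n.+1).

(* An involution of 1..n; the value at 0 is junk. *)
Definition mirror x : 'I_n.+1 := inord (n.+1 - x).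

Lemma mirrorE x : 0 < x -> mirror x = n.+1 - x :> nat.
Proof. by move=> x0; rewrite inordK //; move: x0; ord_lia. Qed.

Lemma mirror_gt0 x : 0 < x -> 0 < mirror x.
Proof. by move=> x0; rewrite mirrorE //; move: x0; ord_lia. Qed.

Lemma mirrorK x : 0 < x -> mirror (mirror x) = x.
Proof. by move=> x0; apply: ord_inj; rewrite !mirrorE ?mirror_gt0 //; move: x0; ord_lia. Qed.

Definition antidiag_free U := [forall x in U, forall y in U, x + y != n.+1].

Lemma antidiag_freeP U : reflect {in U &, forall x y, x + y != n.+1} (antidiag_free U).
Proof.
apply: (iffP forall_inP) => [h x y xU | h x xU]; first by move/forall_inP: (h x xU); apply.
by apply/forall_inP => y; apply: h.
Qed.

Lemma vertE p : (p \in vert n) = (0 < p.1) && (p.1 <= p.2).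
Proof. by rewrite inE. Qed.

Lemma cone_pointE v : v \in vert n -> cone_point (Delta n) v = antidiag v.
Proof.
move=> vV; apply/forall_inP/idP => [vcone | vA F /facetsP[FD Fmax]].
  apply/negPn/negP => vnA; have := vV; rewrite vertE => /andP[v0 v12].
  pose q : pt n := (mirror v.1, mirror v.1).
  have qE : q.1 = n.+1 - v.1 :> nat by rewrite mirrorE.
  have qV : q \in vert n by rewrite vertE /= qE; ord_lia.
  have [F /[dup] Ffacet /facetsP[/sr_complexP[_ Fgen] _] qF] :
      exists2 F, F \in facets (Delta n) & [set q] \subset F.
    apply: facet_exists; apply/sr_complexP; rewrite sub1set; split => // p r.
    by move=> /set1P -> /set1P ->; rewrite eqxx.
  have qv : q != v by apply/eqP => eqv; move: qE; rewrite eqv; ord_lia.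
  move: (Fgen q v (subsetP qF q (set11 q)) (vcone F Ffacet) qv).
  rewrite /gen qV vV vnA /antidiag /= qE; ord_lia.
suff <- : v |: F = F by rewrite setU11.
apply: Fmax (subsetUr _ _); case/sr_complexP: FD => FV Fgen.
apply/sr_complexP; split; first by rewrite subUset sub1set vV.
move=> p q /setU1P[-> | pF] /setU1P[-> | qF]; last exact: Fgen.
all: by rewrite ?eqxx // /gen vA /= ?andbF.
Qed.

Definition core_face F := [&& F \subset vert n, chain F & antidiag_free (ends F)].

Lemma core_DeltaE F : (F \in core (vert n) (Delta n)) = core_face F.
Proof.
have nonconeE : (F \subset [set v in vert n | ~~ cone_point (Delta n) v]) =
    (F \subset vert n) && [forall p in F, ~~ antidiag p].
  apply/subsetP/andP => [hF | [/subsetP FV /forall_inP FnA] p pF].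
    split; first by apply/subsetP => p /hF; rewrite inE => /andP[].
    by apply/forall_inP => p /hF; rewrite inE => /andP[pV]; rewrite cone_pointE.
  by rewrite inE FV // cone_pointE ?FnA ?FV.
rewrite inE nonconeE; apply/andP/and3P => [[/sr_complexP[FV Fgen]] | ].
  case/andP=> _ /forall_inP FnA.
  have Fgen2 p q : p \in F -> q \in F -> p != q -> ~~ gen p q && ~~ gen q p.
    by move=> pF qF pq; rewrite !Fgen // eq_sym.
  have FV' := subsetP FV; split=> //.
    apply/chainP; split=> [p /FV' | p q pF qF]; first by rewrite vertE => /andP[].
    have [-> | pq] := eqVneq p q; first by rewrite /subint !leqnn.
    by move: (Fgen2 p q pF qF pq); rewrite /gen !FV' // !FnA //= /subint; ord_lia.
  apply/antidiag_freeP => x y /endsP[p pF ex] /endsP[q qF ey].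
  move: (FnA p pF) (hn); rewrite /antidiag; have [epq | pq] := eqVneq p q.
    by subst q; case: ex => ->; case: ey => ->; ord_lia.
  move: (Fgen2 p q pF qF pq); rewrite /gen !FV' // !FnA //=.
  by case: ex => ->; case: ey => ->; ord_lia.
case=> FV hF /antidiag_freeP hfree; split; last first.
  by rewrite FV; apply/forall_inP => p pF; apply: hfree; [apply: ends1 | apply: ends2].
apply/sr_complexP; split=> // p q pF qF _; rewrite /gen; apply/negP => /and5P[_ _ _ _].
move: (hfree _ _ (ends1 pF) (ends1 qF)) (hfree _ _ (ends1 pF) (ends2 qF)).
move: (hfree _ _ (ends2 pF) (ends1 qF)) (hfree _ _ (ends2 pF) (ends2 qF)).
by move: (chain_nested hF pF qF); rewrite /subint; ord_lia.
Qed.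

Lemma card_positive : #|[set x : 'I_n.+1 | 0 < x]| = n.
Proof.
have -> : [set x : 'I_n.+1 | 0 < x] = [set~ ord0] by apply/setP => x; rewrite !inE lt0n.
by rewrite cardsC1 card_ord.
Qed.

Lemma antidiag_freeS U W : U \subset W -> antidiag_free W -> antidiag_free U.
Proof.
move=> /subsetP UW /antidiag_freeP hW; apply/antidiag_freeP => x y /UW xW /UW; exact: hW.
Qed.

Lemma antidiag_freeU1 U x :
  antidiag_free U -> 0 < x -> mirror x \notin U -> antidiag_free (x |: U).
Proof.
move=> /antidiag_freeP hU x0 mxU.
have hx y : y \in U -> x + y != n.+1.
  apply: contraTneq => e; suff <- : mirror x = y by [].
  by apply: ord_inj; rewrite mirrorE //; move: e; ord_lia.
apply/antidiag_freeP => y z /setU1P[-> | yU] /setU1P[-> | zU].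
- by move: (hn); ord_lia.
- exact: hx.
- by rewrite addnC hx.
- exact: hU.
Qed.

Lemma card_antidiag_free U : antidiag_free U -> {in U, forall x, 0 < x} -> #|U| <= m.
Proof.
move=> /antidiag_freeP hU Upos.
have minj : {in U &, injective mirror}.
  move=> x y xU yU /(congr1 (@nat_of_ord _)); rewrite !mirrorE ?Upos // => e.
  by apply: ord_inj; move: e; ord_lia.
have disj : U :&: mirror @: U = set0.
  apply/setP => x; rewrite in_set0; apply/negbTE/setIP => -[xU /imsetP[y yU exy]].
  by move: (hU x y xU yU) (Upos y yU); rewrite exy mirrorE ?Upos //; ord_lia.
have sub : U :|: mirror @: U \subset [set x : 'I_n.+1 | 0 < x].
  apply/subsetP => x /setUP[xU | /imsetP[y yU ->]]; rewrite inE; first exact: Upos.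
  exact/mirror_gt0/Upos.
move: (subset_leq_card sub); rewrite card_positive cardsU disj cards0 subn0 card_in_imset //.
by rewrite addnn => le; rewrite -leq_double -hn.
Qed.

Lemma ends_gt0 F : F \subset vert n -> {in ends F, forall x, 0 < x}.
Proof.
move=> /subsetP FV x /endsP[p /FV]; rewrite vertE => /andP[p1 p12].
by case=> ->; move: p1 p12; ord_lia.
Qed.

Lemma card_core_face F : core_face F -> #|F| <= m.
Proof.
case/and3P => FV hF hfree.
exact: leq_trans (card_chain_le_ends hF) (card_antidiag_free hfree (ends_gt0 FV)).
Qed.

Lemma core_face_extend F :
  core_face F -> #|F| < m -> exists2 p, p \notin F & core_face (p |: F).
Proof.
case/and3P => FV hF hfree ltFm; have /antidiag_freeP hfree' := hfree.
(* S meets every mirror pair, so it has at least m > #|F| points, and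
   [hull F] is injective: some hull F x with x in S is a new vertex. *)
pose S := [set x : 'I_n.+1 | (0 < x) && (mirror x \notin ends F)].
have cardS : m <= #|S|.
  have cover : [set x : 'I_n.+1 | 0 < x] \subset S :|: mirror @: S.
    apply/subsetP => x; rewrite inE => x0; rewrite in_setU inE x0 /=.
    case: (boolP (mirror x \in ends F)) => //= mxF; apply/imsetP.
    exists (mirror x); last by rewrite mirrorK.
    rewrite inE mirror_gt0 // mirrorK //; apply/negP => xF.
    by move: (hfree' _ _ xF mxF); rewrite mirrorE //; move: x0; ord_lia.
  rewrite -leq_double -hn -addnn -{1}card_positive (leq_trans (subset_leq_card cover)) //.
  exact: leq_trans (leq_card_setU _ _) (leq_add (leqnn _) (leq_imset_card _ _)).
have [x xS hxF] : exists2 x, x \in S & hull F x \notin F.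
  apply/exists_inP; apply: contraTT ltFm => /exists_inPn allin; rewrite -leqNgt.
  apply: leq_trans cardS _; rewrite -(card_imset S (hull_inj hF)).
  by apply/subset_leq_card/subsetP => _ /imsetP[x xS ->]; rewrite -[_ \in F]negbK allin.
move: xS; rewrite inE => /andP[x0 mxF]; exists (hull F x) => //.
have [h1 h2] := hull_ends F x.
have pos : {in x |: ends F, forall y, 0 < y} by move=> y /setU1P[-> | /(ends_gt0 FV)].
apply/and3P; split; last 2 first.
- exact: hull_chain.
- apply: antidiag_freeS (antidiag_freeU1 hfree x0 mxF).
  by rewrite endsU1 subUset sub1set h1 subUset sub1set h2 subsetUr.
rewrite subUset sub1set FV andbT vertE pos //.
exact: chain_le (hull_chain x hF) (setU11 _ _).
Qed.

Lemma facets_coreE F :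
  (F \in facets (core (vert n) (Delta n))) = core_face F && (#|F| == m).
Proof.
apply/facetsP/andP => [[] | [FD /eqP cardF]].
  rewrite core_DeltaE => FD Fmax; split=> //; rewrite eqn_leq card_core_face //= leqNgt.
  apply/negP => /(core_face_extend FD)[p pF hp].
  have := Fmax (p |: F); rewrite core_DeltaE => /(_ hp (subsetUr _ _)) e.
  by move: pF; rewrite -e setU11.
split=> [|G]; first by rewrite core_DeltaE.
rewrite core_DeltaE => GD FG; apply/eqP; rewrite eq_sym eqEcard FG cardF card_core_face //.
Qed.

Definition transversals : {set {set 'I_n.+1}} :=
  [set U | [&& antidiag_free U, [forall x in U, 0 < x] & #|U| == m]].

Lemma transversalsP U :
  reflect [/\ antidiag_free U, {in U, forall x, 0 < x} & #|U| = m] (U \in transversals).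
Proof.
by rewrite inE; apply: (iffP and3P) => -[? /forall_inP ? /eqP ?]; split=> //; apply/forall_inP.
Qed.

Lemma facets_coreP F : (F \in facets (core (vert n) (Delta n))) =
  (ends F \in transversals) && (F \in full_chains (ends F)).
Proof.
rewrite facets_coreE; apply/andP/andP => [[/and3P[FV hF hfree] /eqP cardF] | []].
  have cardE : #|ends F| = m.
    apply/eqP; rewrite eqn_leq card_antidiag_free //=; last exact: ends_gt0.
    by rewrite -cardF card_chain_le_ends.
  split; first by apply/transversalsP; split=> //; apply: ends_gt0.
  by apply/full_chainsP; split=> //; rewrite cardF cardE.
case/transversalsP => hfree Upos cardU /full_chainsP[hF _ cardF].
split; last by rewrite cardF cardU.
apply/and3P; split=> //; apply/subsetP => p pF.
by rewrite vertE Upos ?ends1 // (chain_le hF pF).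
Qed.

Definition lower (i : 'I_m) : 'I_n.+1 := inord i.+1.

Lemma lowerE i : lower i = i.+1 :> nat.
Proof. by rewrite inordK //; move: (hn); ord_lia. Qed.

Lemma mirror_lowerE i : mirror (lower i) = n - i :> nat.
Proof. by rewrite mirrorE lowerE //; move: (hn); ord_lia. Qed.

Lemma lower_or_mirror x : 0 < x -> exists i, x = lower i \/ x = mirror (lower i).
Proof.
move=> x0; case: (leqP x m) => xm.
  have im : x.-1 < m by move: x0 xm; ord_lia.
  by exists (Ordinal im); left; apply: ord_inj; rewrite lowerE /=; move: x0; ord_lia.
have im : n - x < m by move: xm (hn); ord_lia.
by exists (Ordinal im); right; apply: ord_inj; rewrite mirror_lowerE /=; move: xm (hn); ord_lia.
Qed.

Definition transversal_of (V : {set 'I_m}) : {set 'I_n.+1} :=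
  [set if i \in V then lower i else mirror (lower i) | i : 'I_m].

Lemma mem_lower_transversal V i : (lower i \in transversal_of V) = (i \in V).
Proof.
apply/imsetP/idP => [[j _] | iV]; last by exists i; rewrite ?iV.
move/(congr1 (@nat_of_ord _)); case: ifP => jV; rewrite ?mirror_lowerE !lowerE => e.
  by have -> : i = j by apply: ord_inj; move: e; ord_lia.
by move: e (hn); ord_lia.
Qed.

Lemma transversal_ofP V : transversal_of V \in transversals.
Proof.
have valE i : (if i \in V then lower i else mirror (lower i)) =
    (if i \in V then i.+1 else n - i) :> nat.
  by case: ifP; rewrite ?lowerE ?mirror_lowerE.
apply/transversalsP; split.
- apply/antidiag_freeP => _ _ /imsetP[i _ ->] /imsetP[j _ ->]; rewrite !valE.
  have [-> | ij] := eqVneq i j; first by case: ifP; move: (hn); ord_lia.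
  by move: ij; rewrite -val_eqE /=; case: ifP; case: ifP; move: (hn); ord_lia.
- by move=> _ /imsetP[i _ ->]; rewrite valE; case: ifP; move: (hn); ord_lia.
rewrite card_imset ?card_ord // => i j /(congr1 (@nat_of_ord _)); rewrite !valE => e.
by apply: ord_inj; move: e; case: ifP; case: ifP; move: (hn); ord_lia.
Qed.

Lemma transversal_of_lower U :
  U \in transversals -> transversal_of [set i | lower i \in U] = U.
Proof.
case/transversalsP => /antidiag_freeP hfree Upos cardU; apply/esym/eqP.
rewrite eqEcard cardU; have /transversalsP[_ _ ->] := transversal_ofP [set i | lower i \in U].
rewrite leqnn andbT; apply/subsetP => x xU; apply/imsetP.
have [i [ex | ex]] := lower_or_mirror (Upos x xU); exists i => //; rewrite inE.
  by rewrite -ex xU.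
rewrite ifN ?ex //; apply/negP => lU; move: (hfree _ _ xU lU).
by rewrite ex mirror_lowerE lowerE; move: (hn); ord_lia.
Qed.

Lemma card_transversals : #|transversals| = 2 ^ m.
Proof.
have -> : transversals = transversal_of @: setT.
  apply/setP => U; apply/idP/imsetP => [UT | [V _ ->]]; last exact: transversal_ofP.
  by exists [set i | lower i \in U]; rewrite ?transversal_of_lower.
rewrite card_imset => [|V1 V2 e]; first by rewrite -powersetT card_powerset cardsT card_ord.
by apply/setP => i; rewrite -!mem_lower_transversal e.
Qed.

Lemma card_facets_core :
  0 < m -> #|facets (core (vert n) (Delta n))| = 2 ^ m * 2 ^ m.-1.
Proof.
move=> m_gt0; rewrite -sum1_card (partition_big (@ends n) (mem transversals)); last first.
  by move=> F; rewrite facets_coreP => /andP[].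
rewrite -card_transversals -sum_nat_const; apply: eq_bigr => U UT.
have /transversalsP[_ _ cardU] := UT.
rewrite -(@card_full_chains _ U m.-1) ?prednK // -sum1_card; apply: eq_bigl => F.
rewrite facets_coreP; case: (eqVneq (ends F) U) => [-> | neqU].
  by rewrite andbT andb_idl.
by rewrite andbF; apply/esym/negbTE; apply: contra_neqN neqU => /full_chainsP[].
Qed.

End StanleyReisner.

Theorem lemma5p1 (m n : nat) (hm : 1 <= m) (hn : n = m.*2) :
  let D' := core (vert n) (Delta n) in
  pure D' /\ #|facets D'| = 2 ^ (n - 1) /\
  (forall F, F \in facets D' -> #|F| = m).
Proof.
have facet_card F : F \in facets (core (vert n) (Delta n)) -> #|F| = m.
  by rewrite (facets_coreE hn) => /andP[_ /eqP].
split; first by exists m.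
split=> //; rewrite (card_facets_core hn hm) -expnD hn; congr (2 ^ _); lia.
Qed.
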